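(* Let $k\geq 3$ be an integer and $\ell\geq 2$ an even integer, and let $G_1^{\{\ell,k\}}$ and $G_2^{\{\ell,k\}}$ be the indistinguishability graphs (for a fixed permutation $\sigma\neq\mathrm{id}$ of $[k]$). Let $\chi_1$ and $\chi_2$ be arbitrary $k$-partial $k$-colorings of $G_1^{\{\ell,k\}}$ and $G_2^{\{\ell,k\}}$, respectively. Then (1) $\chi_1((i,1))=\chi_1((i,\ell))$ for every $i\in[k]$; and (2) there exists $j\in[k]$ with $\chi_2((j,1))\neq\chi_2((j,\ell))$.
   Context: Let $[m]=\{1,\dots,m\}$. A $k$-partial $c$-coloring of a graph $H=(V,E)$ is a map $\gamma:V\to\{1,\dots,c\}$ such that every vertex $v$ has at least $\min\{k,\deg_H(v)\}$ neighbors $u$ with $\gamma(u)\neq\gamma(v)$. Path of cliques: for permutations $\tau_1,\dots,\tau_{\ell-1}$ of $[k]$, $P(\tau_1,\dots,\tau_{\ell-1})$ has vertex set $[k]\times[\ell]$ and edges $\{(a,i),(b,i)\}$ for $a\neq b$, $i\in[\ell]$, and $\{(a,i),(b,i+1)\}$ for $i\in[\ell-1]$, $a,b\in[k]$, $b\neq\tau_i(a)$. The $k$-edge-gadget transformation: given a graph $G$ and for each edge a chosen ordered pair $(u,v)$, keep all vertices of $G$, delete each edge $\{u,v\}$, and add $k$ new vertices $(u,v,1),\dots,(u,v,k)$ forming a clique together with edges $\{u,(u,v,j)\}$ for $j=1,\dots,k-1$ and $\{v,(u,v,k)\}$. Indistinguishability graphs: let $G_1=P(\tau_1,\dots,\tau_{\ell-1})$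 with all $\tau_i=\mathrm{id}$, and $G_2=P(\tau_1',\dots,\tau_{\ell-1}')$ with $\tau_i'=\mathrm{id}$ for $i\neq \ell/2$ and $\tau'_{\ell/2}=\sigma$, where $\sigma$ is a fixed permutation of $[k]$ different from the identity. $G_1^{\{\ell,k\}}$ (resp. $G_2^{\{\ell,k\}}$) is obtained from $G_1$ (resp. $G_2$) by the $k$-edge-gadget transformation, where an edge $\{(a,i),(b,i)\}$ with $a<b$ is oriented as $((a,i),(b,i))$ and an edge $\{(a,i),(b,i+1)\}$ is oriented as $((a,i),(b,i+1))$. The vertices $(i,1)$ and $(i,\ell)$ are original vertices of the path of cliques. *)

From HB Require Import structures.
From mathcomp Require Import all_boot all_order all_fingroup.
Set Implicit Arguments. Unset Strict Implicit. Unset Printing Implicit Defensive.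

(* Conventions: [k] is 'I_k (0-indexed), [l] is 'I_l; vertex (a,i) of the
   path of cliques is the pair (a, i) : 'I_k * 'I_l. *)

Definition partial_coloring (V : finType) (adj : rel V) (k c : nat)
  (g : V -> 'I_c) : Prop :=
  forall v : V,
    minn k #|[set u | adj v u]| <= #|[set u | adj v u & g u != g v]|.

(* Path of cliques P(tau_1,...,tau_{l-1}); tau i (0-indexed column i) is the
   permutation between column i and column i+1 (= tau_{i+1} of the paper). *)
Definition path_cliques (k l : nat) (tau : nat -> {perm 'I_k})
  : rel ('I_k * 'I_l) :=
  fun x y =>
    [|| (x.2 == y.2) && (x.1 != y.1),
        (y.2 == x.2.+1 :> nat) && (y.1 != tau x.2 x.1)
      | (x.2 == y.2.+1 :> nat) && (x.1 != tau y.2 y.1)].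

Definition path_cliques_or (k l : nat) (tau : nat -> {perm 'I_k})
  : rel ('I_k * 'I_l) :=
  fun x y => path_cliques tau x y &&
    (if x.2 == y.2 then x.1 < y.1 else y.2 == x.2.+1 :> nat).

(* Vertices of the k-edge-gadget transformation of a graph on T whose edges
   are given with orientation o (o u v: edge {u,v} oriented as (u,v)):
   the original vertices, plus (u,v,j) for every oriented edge, j in [k]. *)
Definition gadget_vertex (T : finType) (k : nat) (o : rel T) :=
  (T + {x : T * T * 'I_k | o x.1.1 x.1.2})%type.

(* Adjacency: the (u,v,_) form a clique; u ~ (u,v,j) for j = 1..k-1
   (0-indexed j < k-1); v ~ (u,v,k) (0-indexed j = k-1); all edges of the
   original graph are deleted. *)
Definition gadget_adj (T : finType) (k : nat) (o : rel T)
  : rel (gadget_vertex k o) :=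
  fun x y =>
    match x, y with
    | inl _, inl _ => false
    | inr p, inr q => ((val p).1 == (val q).1) && ((val p).2 != (val q).2)
    | inl w, inr p | inr p, inl w =>
        let '(u, v, j) := val p in
        ((w == u) && (j < k.-1)) || ((w == v) && (j == k.-1 :> nat))
    end.

Definition tau_G1 (k : nat) : nat -> {perm 'I_k} := fun _ => 1%g.
(* tau'_{l/2} = sigma (1-indexed), i.e. 0-indexed column i with i+1 = l/2 *)
Definition tau_G2 (k l : nat) (sigma : {perm 'I_k}) : nat -> {perm 'I_k} :=
  fun i => if i.+1 == l./2 then sigma else 1%g.

Definition G1_vertex (k l : nat) :=
  gadget_vertex k (@path_cliques_or k l (tau_G1 k)).
Definition G1_adj (k l : nat) : rel (G1_vertex k l) :=
  @gadget_adj _ k (@path_cliques_or k l (tau_G1 k)).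
Definition G2_vertex (k l : nat) (sigma : {perm 'I_k}) :=
  gadget_vertex k (@path_cliques_or k l (tau_G2 l sigma)).
Definition G2_adj (k l : nat) (sigma : {perm 'I_k}) : rel (G2_vertex l sigma) :=
  @gadget_adj _ k (@path_cliques_or k l (tau_G2 l sigma)).

From HB Require Import structures.
From mathcomp Require Import all_boot all_order all_fingroup.
From mathcomp Require Import zify.
Set Implicit Arguments. Unset Strict Implicit. Unset Printing Implicit Defensive.

(* A vertex of an edge gadget has at most k neighbours, so a k-partial
   k-coloring gives it a colour distinct from all of them.  The k gadget
   vertices of an edge {u,v} then use all k colours; the one coloured like u
   cannot be adjacent to u, so it is the one adjacent to v, and u, v get
   different colours.  Thus the original vertices carry a proper k-coloring
   of the path of cliques, in which every column is rainbow and the colour of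
   (a,i) reappears at (tau_i(a), i+1).  Along G1 colours are carried
   unchanged from the first column to the last; along G2 they are permuted
   once by sigma, which moves some j. *)

Lemma partial_coloring_small_nbhd (V : finType) (adj : rel V) (k c : nat)
    (g : V -> 'I_c) (v u : V) :
  partial_coloring adj k g -> #|[set w | adj v w]| <= k ->
  adj v u -> g u != g v.
Proof.
move=> Hg small adj_vu.
have := Hg v; rewrite (minn_idPr small) => card_diff.
have sub : [set w | adj v w & g w != g v] \subset [set w | adj v w].
  by apply/subsetP => w; rewrite !inE => /andP [].
have /eqP diff_all : [set w | adj v w & g w != g v] == [set w | adj v w].
  by rewrite eqEcard sub card_diff.
have : u \in [set w | adj v w] by rewrite inE.
by rewrite -diff_all inE => /andP [].
Qed.

Section EdgeGadget.
Variables (T : finType) (k : nat) (o : rel T) (u v : T).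
Hypotheses (k_gt0 : 0 < k) (o_uv : o u v).

Definition gadget_copy (j : 'I_k) : gadget_vertex k o :=
  inr (exist (fun x : T * T * 'I_k => o x.1.1 x.1.2) (u, v, j) o_uv).

Lemma gadget_copy_nbhd_card (j : 'I_k) :
  #|[set y | gadget_adj (gadget_copy j) y]| <= k.
Proof.
pose nbr (j' : 'I_k) : gadget_vertex k o :=
  if j' == j then (if j < k.-1 then inl u else inl v) else gadget_copy j'.
have sub : [set y | gadget_adj (gadget_copy j) y] \subset nbr @: setT.
  apply/subsetP => -[w|[[[u' v'] j'] o_uv']]; rewrite inE /=.
    case/orP => [/andP [/eqP -> j_lt]|/andP [/eqP -> /eqP j_eq]];
      apply/imsetP; exists j => //; rewrite /nbr eqxx ?j_lt //.
    by rewrite j_eq ltnn.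
  case/andP => /eqP [u_eq v_eq] j'_neq; subst u' v'.
  apply/imsetP; exists j' => //.
  rewrite /nbr eq_sym (negbTE j'_neq).
  by congr inr; apply: val_inj.
rewrite (leq_trans (subset_leq_card sub)) //.
by rewrite (leq_trans (leq_imset_card _ _)) // cardsT card_ord.
Qed.

Variable g : gadget_vertex k o -> 'I_k.
Hypothesis g_col : partial_coloring (@gadget_adj T k o) k g.

Lemma gadget_copy_color_neq (j : 'I_k) y :
  gadget_adj (gadget_copy j) y -> g y != g (gadget_copy j).
Proof.
exact: partial_coloring_small_nbhd g_col (gadget_copy_nbhd_card j).
Qed.

Lemma gadget_copy_color_inj : injective (fun j => g (gadget_copy j)).
Proof.
move=> j j' /= e; apply/eqP; apply: contraT => j_neq.
have := @gadget_copy_color_neq j (gadget_copy j').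
by rewrite /= eqxx j_neq e eqxx => /(_ isT).
Qed.

Lemma gadget_ends_color_neq : g (inl u) != g (inl v).
Proof.
have /codomP [j gu] := inj_card_onto gadget_copy_color_inj (leqnn _) (g (inl u)).
have j_last : j = k.-1 :> nat.
  apply/eqP; rewrite eqn_leq -ltnS prednK ?ltn_ord // leqNgt.
  apply/negP => j_lt; have := @gadget_copy_color_neq j (inl u).
  by rewrite /= eqxx j_lt -gu eqxx => /(_ isT).
have := @gadget_copy_color_neq j (inl v).
by rewrite /= eqxx j_last eqxx orbT -gu eq_sym => /(_ isT).
Qed.

End EdgeGadget.

Section PathOfCliques.
Variables (k l : nat) (tau : nat -> {perm 'I_k}) (c : 'I_k * 'I_l -> 'I_k).
Hypothesis c_proper : forall x y, path_cliques_or tau x y -> c x != c y.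

Lemma column_color_inj (i : 'I_l) : injective (fun a => c (a, i)).
Proof.
move=> a b /= e; apply/eqP; apply: contraT => a_neq.
wlog a_lt : a b e a_neq / a < b.
  move=> wlog_lt; have [|b_lt|/val_inj ab] := ltngtP a b; first exact: wlog_lt.
    by apply: (wlog_lt b a); rewrite 1?eq_sym.
  by rewrite ab eqxx in a_neq.
have := @c_proper (a, i) (b, i).
by rewrite /path_cliques_or /path_cliques /= eqxx a_neq a_lt e eqxx => /(_ isT).
Qed.

Lemma next_column_color (a : 'I_k) (i j : 'I_l) : j = i.+1 :> nat ->
  c (a, i) = c (tau i a, j).
Proof.
move=> j_next.
have /codomP [b cb] := inj_card_onto (@column_color_inj j) (leqnn _) (c (a, i)).
rewrite cb; have [-> //|b_neq] := eqVneq b (tau i a).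
have ij : (i == j) = false by rewrite -val_eqE /= j_next ltn_eqF.
have := @c_proper (a, i) (b, j).
by rewrite /path_cliques_or /path_cliques /= ij j_next eqxx b_neq cb eqxx => /(_ isT).
Qed.

Lemma column_color_const (a : 'I_k) (p q : 'I_l) :
  p <= q -> (forall i, p <= i < q -> tau i = 1%g) -> c (a, p) = c (a, q).
Proof.
have [n q_n] : {n | q = n :> nat} by exists q.
elim: n q q_n => [|n IH] q q_n p_le tau1.
  by congr (c (a, _)); apply: ord_inj; lia.
have [/ord_inj -> //|p_neq] := eqVneq (p : nat) q.
have n_lt : n < l by move: (ltn_ord q); lia.
rewrite (IH (Ordinal n_lt)) //=; last 2 first.
- lia.
- by move=> i i_range; apply: tau1; lia.
by rewrite (@next_column_color a (Ordinal n_lt) q) //= tau1 ?perm1 //; lia.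
Qed.

Lemma column_color_twist (a : 'I_k) (p r r' q : 'I_l) :
  p <= r -> r' = r.+1 :> nat -> r' <= q ->
  (forall i, p <= i < q -> i != r -> tau i = 1%g) ->
  c (a, p) = c (tau r a, q).
Proof.
move=> p_le r_next r'_le tau1.
rewrite (column_color_const a p_le) ?(next_column_color a r_next).
  by apply: column_color_const => // i i_range; apply: tau1; lia.
by move=> i i_range; apply: tau1; lia.
Qed.

End PathOfCliques.

Lemma tau_G2_id (k l : nat) (sigma : {perm 'I_k}) (i : nat) :
  i.+1 != l./2 -> tau_G2 l sigma i = 1%g.
Proof. by rewrite /tau_G2 => /negbTE ->. Qed.

Lemma perm_neq1_moved (T : finType) (s : {perm T}) : s != 1%g -> exists x, s x != x.
Proof.
move=> s_neq; apply/existsP; apply: contraR s_neq => /existsPn fixed.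
by apply/eqP/permP => x; rewrite perm1; apply/eqP/negbNE.
Qed.

Theorem fact1 (k l : nat) (hk : 3 <= k) (hl : 2 <= l) (hev : ~~ odd l)
  (sigma : {perm 'I_k}) (hsigma : sigma != 1%g)
  (chi1 : G1_vertex k l -> 'I_k) (chi2 : G2_vertex l sigma -> 'I_k) :
  partial_coloring (@G1_adj k l) k chi1 ->
  partial_coloring (@G2_adj k l sigma) k chi2 ->
  (forall (i : 'I_k) (p q : 'I_l), val p = 0 -> val q = l.-1 ->
     chi1 (inl (i, p)) = chi1 (inl (i, q))) /\
  (exists (j : 'I_k) (p q : 'I_l), [/\ val p = 0, val q = l.-1 &
     chi2 (inl (j, p)) != chi2 (inl (j, q))]).
Proof.
move=> chi1_col chi2_col; have k_gt0 : 0 < k by lia.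
have c1_proper x y (o_xy : path_cliques_or (tau_G1 k) x y) :=
  gadget_ends_color_neq k_gt0 o_xy chi1_col.
have c2_proper x y (o_xy : path_cliques_or (tau_G2 l sigma) x y) :=
  gadget_ends_color_neq k_gt0 o_xy chi2_col.
split=> [i p q p0 q_last|].
  by apply: (column_color_const c1_proper); rewrite p0.
have l_half : l./2 + l./2 = l by rewrite addnn -[RHS]odd_double_half (negbTE hev).
have [first_lt mid_pred_lt mid_lt last_lt] :
  [/\ 0 < l, l./2.-1 < l, l./2 < l & l.-1 < l] by split; lia.
pose p : 'I_l := Ordinal first_lt; pose q : 'I_l := Ordinal last_lt.
have twist x : chi2 (inl (x, p)) = chi2 (inl (sigma x, q)).
  have tau_mid : tau_G2 l sigma l./2.-1 = sigma.
    by rewrite /tau_G2 prednK ?eqxx //; lia.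
  rewrite (@column_color_twist _ _ _ _ c2_proper x p (Ordinal mid_pred_lt)
    (Ordinal mid_lt) q) /= ?tau_mid //; [lia | lia |].
  by move=> i _ i_neq; apply: tau_G2_id; lia.
have [j sigma_j] := perm_neq1_moved hsigma.
exists j, p, q; split=> //; rewrite twist.
by apply: contra sigma_j => /eqP /(column_color_inj c2_proper) ->.
Qed.
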